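(* Let $\rho:\gamma_0\to\gamma_1\to\cdots\to\gamma_r$ be a lossy execution of a broadcast protocol $P=(Q,I,M,\Delta)$ with $\gamma_r=(V,E,L)$. For every $q\in L(\gamma_r)$ and every node $v^q\in V$ with $L(v^q)=q$, there exist $s\in\mathbb{N}$ and a lossy execution $\rho':\gamma'_0\to\gamma'_1\to\cdots\to\gamma'_s$ with $\gamma'_s=(V',E',L')$ such that $|V'|=|V|+1$, and there is an injection $\iota:V\to V'$ with $L'(\iota(v))=L(v)$ for every $v\in V$, and, for the extra node $v_{new}\in V'\setminus\iota(V)$: $L'(v_{new})=q$; for every $v\in V$, $v_{new}$ and $\iota(v)$ are adjacent in $E'$ if and only if $v^q$ and $v$ are adjacent in $E$; the number of broadcasts (lost or successful) performed by $v_{new}$ along $\rho'$ equals the number of broadcasts performed by $v^q$ along $\rho$; and $v_{new}$ performs no successful broadcast along $\rho'$.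
   Context: A broadcast protocol is a tuple $P=(Q,I,M,\Delta)$ where $Q$ is a finite set of states, $I\subseteq Q$ initial states, $M$ a finite message alphabet and $\Delta\subseteq Q\times\{!!m,\ ??m \mid m\in M\}\times Q$ ($!!m$ = broadcast, $??m$ = reception). Protocols are complete for receptions: for every $q$, $m$ there is $q'$ with $(q,??m,q')\in\Delta$. A configuration is a finite undirected graph $\gamma=(V,E,L)$, $E$ symmetric irreflexive, $L:V\to Q$; $L(\gamma)=L(V)$; $\gamma$ is initial if $L(V)\subseteq I$. A lossy step goes from $\gamma=(V,E,L)$ to $\gamma'=(V,E,L')$ (same nodes and edges) if there exist a node $v$ (which broadcasts in this step) and $m\in M$ with $(L(v),!!m,L'(v))\in\Delta$ and either (a) $L'(v')=L(v')$ for all $v'\neq v$ (the broadcast is lost), or (b) for every $v'\neq v$: if $v'$ is a neighbour of $v$ then $(L(v'),??m,L'(v'))\in\Delta$, otherwise $L'(v')=L(v')$ (the broadcast is successful). A lossy execution is a sequence $\gamma_0,\dots,\gamma_r$ of configurations with $\gamma_0$ initial and consecutive lossy steps (so node set and edges are fixed). *)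

From mathcomp Require Import all_boot.
Set Implicit Arguments. Unset Strict Implicit. Unset Printing Implicit Defensive.

Inductive action (M : Type) := Bcast of M | Recv of M.
Arguments Bcast {M} _.
Arguments Recv {M} _.

Definition trans_rel (Q M : Type) := Q -> action M -> Q -> Prop.

Definition complete_receptions (Q M : Type) (Delta : trans_rel Q M) :=
  forall (q : Q) (m : M), exists q', Delta q (Recv m) q'.

(* Nodes and edges are
   fixed along an execution, so an execution is a sequence of labellings. *)
Definition graph (V : finType) (E : rel V) := symmetric E /\ irreflexive E.

(* One annotated step of an execution: the broadcasting node, the message,
   whether the broadcast is successful (true) or lost (false), and the
   labelling after the step. *)
Record step (V Q M : Type) := Step {
  bnode : V; bmsg : M; bsucc : bool; post : V -> Q }.

Definition lossy_step (Q M : Type) (Delta : trans_rel Q M) (V : finType)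
    (E : rel V) (L : V -> Q) (v : V) (m : M) (succ : bool) (L' : V -> Q) :=
  Delta (L v) (Bcast m) (L' v) /\
  if succ then
    (forall v', v' != v ->
       (E v v' -> Delta (L v') (Recv m) (L' v')) /\ (~~ E v v' -> L' v' = L v'))
  else (forall v', v' != v -> L' v' = L v').

Fixpoint steps_from (Q M : Type) (Delta : trans_rel Q M) (V : finType)
    (E : rel V) (L : V -> Q) (s : seq (step V Q M)) : Prop :=
  match s with
  | [::] => True
  | st :: s' => lossy_step Delta E L (bnode st) (bmsg st) (bsucc st) (post st)
                /\ steps_from Delta E (post st) s'
  end.

Definition lossy_execution (Q M : Type) (I : pred Q) (Delta : trans_rel Q M)
    (V : finType) (E : rel V) (L0 : V -> Q) (s : seq (step V Q M)) : Prop :=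
  (forall v, I (L0 v)) /\ steps_from Delta E L0 s.

Definition final (V Q M : Type) (L0 : V -> Q) (s : seq (step V Q M)) : V -> Q :=
  last L0 [seq post st | st <- s].

Definition nb_broadcasts (V : finType) (Q M : Type) (v : V)
    (s : seq (step V Q M)) : nat :=
  count (fun st => bnode st == v) s.

Definition has_successful_broadcast (V : finType) (Q M : Type) (v : V)
    (s : seq (step V Q M)) : bool :=
  has (fun st => (bnode st == v) && bsucc st) s.

From mathcomp Require Import all_boot.
Set Implicit Arguments. Unset Strict Implicit.

(* The new node is a clone of [vq]: it lives in [option V] as [None], sees the
   graph through [odflt vq], and copies every broadcast of [vq] by a lost one.
   Since the clone has the neighbours of [vq], every successful broadcast
   received by [vq] is received identically by the clone; it is not a
   neighbour of [vq] itself (irreflexivity), so it ignores [vq]'s own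
   broadcasts and catches up with them through its lost copies.  Hence after
   each simulated step the clone carries the label of [vq]. *)

Lemma graph_relpre (V V' : finType) (f : V' -> V) (E : rel V) :
  graph E -> graph (relpre f E).
Proof. by case=> Esym Eirr; split=> [x y | x] /=; [rewrite Esym | rewrite Eirr]. Qed.

Lemma final_cat (V Q M : Type) (L : V -> Q) (s1 s2 : seq (step V Q M)) :
  final L (s1 ++ s2) = final (final L s1) s2.
Proof. by rewrite /final map_cat last_cat. Qed.

Lemma steps_from_cat (Q M : Type) (Delta : trans_rel Q M) (V : finType)
    (E : rel V) (L : V -> Q) (s1 s2 : seq (step V Q M)) :
  steps_from Delta E L (s1 ++ s2) <->
  steps_from Delta E L s1 /\ steps_from Delta E (final L s1) s2.
Proof.
elim: s1 L => [|st s1 IH] L /=; first by split=> // -[].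
by split=> [[Hst /IH[]] | [[Hst Hs1] Hs2]] //; split=> //; apply/IH.
Qed.

Section CloneNode.

Variables (Q M : Type) (Delta : trans_rel Q M) (V : finType) (E : rel V) (vq : V).
Hypothesis Eirr : irreflexive E.

Local Notation clone := (odflt vq).
Local Notation Eclone := (relpre clone E).

Lemma clone_lossy_step_other L v m b L' :
  lossy_step Delta E L v m b L' -> v != vq ->
  lossy_step Delta Eclone (L \o clone) (Some v) m b (L' \o clone).
Proof.
move=> [Hb Hrest] v_neq_vq; split=> //.
have clone_neq (w : option V) : w != Some v -> clone w != v.
  by case: w => [w|] /=; [apply: contraNneq => -> | rewrite eq_sym].
by case: b Hrest => Hrest w /clone_neq; apply: Hrest.
Qed.

Lemma clone_lossy_step_self L m b L' :
  lossy_step Delta E L vq m b L' ->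
  lossy_step Delta Eclone (L \o clone) (Some vq) m b (oapp L' (L vq)).
Proof.
move=> [Hb Hrest]; split=> //.
have neq_vq (w : V) : Some w != Some vq -> w != vq by apply: contraNneq => ->.
case: b Hrest => Hrest [w /neq_vq w_neq | _] //=.
- exact: Hrest.
- by rewrite Eirr.
- exact: Hrest.
Qed.

Lemma clone_catch_up L m b L' :
  lossy_step Delta E L vq m b L' ->
  lossy_step Delta Eclone (oapp L' (L vq)) None m false (L' \o clone).
Proof. by case=> Hb _; split=> // -[]. Qed.

Definition clone_step (L : V -> Q) (st : step V Q M) :
    seq (step (option V) Q M) :=
  let: Step v m b L' := st in
  if v == vq then
    [:: Step (Some v) m b (oapp L' (L vq)); Step None m false (L' \o clone)]
  else [:: Step (Some v) m b (L' \o clone)].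

Fixpoint clone_steps (L : V -> Q) (s : seq (step V Q M)) :
    seq (step (option V) Q M) :=
  if s is st :: s' then clone_step L st ++ clone_steps (post st) s' else [::].

Lemma final_clone_step L st : final (L \o clone) (clone_step L st) = post st \o clone.
Proof. by case: st => v m b L' /=; case: ifP. Qed.

Lemma final_clone_steps L s : final (L \o clone) (clone_steps L s) = final L s \o clone.
Proof.
elim: s L => [|st s IH] L //=.
by rewrite final_cat final_clone_step IH.
Qed.

Lemma steps_from_clone_steps L s :
  steps_from Delta E L s -> steps_from Delta Eclone (L \o clone) (clone_steps L s).
Proof.
elim: s L => [|st s IH] L //= [Hst Hs].
apply/steps_from_cat; rewrite final_clone_step; split; last exact: IH.
case: st Hst {Hs} => v m b L' /=.
case: eqP => [-> | /eqP v_neq_vq] Hst /=.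
- by split; [|split]; [exact: clone_lossy_step_self | exact: (clone_catch_up Hst) |].
- by split=> //; exact: clone_lossy_step_other.
Qed.

Lemma nb_broadcasts_clone_steps L s :
  nb_broadcasts None (clone_steps L s) = nb_broadcasts vq s.
Proof.
rewrite /nb_broadcasts; elim: s L => [|[v m b L'] s IH] L //=.
by rewrite count_cat IH; case: eqP => [->|] //=; rewrite eqxx.
Qed.

Lemma clone_no_successful_broadcast L s :
  ~~ has_successful_broadcast None (clone_steps L s).
Proof.
rewrite /has_successful_broadcast; elim: s L => [|[v m b L'] s IH] L //=.
by rewrite has_cat negb_or IH andbT; case: ifP.
Qed.

End CloneNode.

Theorem proposition3p6
  (Q M : finType) (I : pred Q) (Delta : trans_rel Q M)
  (Hcomplete : complete_receptions Delta)
  (V : finType) (E : rel V) (HE : graph E)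
  (L0 : V -> Q) (s : seq (step V Q M))
  (Hexec : lossy_execution I Delta E L0 s)
  (q : Q) (Hq : q \in [seq final L0 s v | v : V])
  (vq : V) (Hvq : final L0 s vq = q) :
  exists (V' : finType) (E' : rel V') (L0' : V' -> Q) (s' : seq (step V' Q M))
         (iota : V -> V') (vnew : V'),
    graph E' /\ lossy_execution I Delta E' L0' s' /\
    #|V'| = #|V|.+1 /\
    injective iota /\
    (forall v, final L0' s' (iota v) = final L0 s v) /\
    (forall v, iota v != vnew) /\
    final L0' s' vnew = q /\
    (forall v, E' vnew (iota v) = E vq v) /\
    nb_broadcasts vnew s' = nb_broadcasts vq s /\
    ~~ has_successful_broadcast vnew s'.
Proof.
case: Hexec => L0_init Hs.
have Eirr : irreflexive E by case: HE.
exists (option V), (relpre (odflt vq) E), (L0 \o odflt vq), (clone_steps vq L0 s).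
exists Some, None.
rewrite !final_clone_steps.
split; first exact: graph_relpre.
split; first by split=> [o | ]; [exact: L0_init | exact: steps_from_clone_steps].
do !split => //.
- exact: card_option.
- exact: Some_inj.
- exact: nb_broadcasts_clone_steps.
- exact: clone_no_successful_broadcast.
Qed.
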